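(* Let $n,m\in\mathbb{N}$, $f:\mathbb{F}_2^n\to\mathbb{F}_2$, $\mathbf{y}\in\mathbb{F}_2^n$, and $h(\mathbf{x})=\mathbf{x}\cdot\mathbf{y}$. Then: (i) when $A^{(m)3,3}_n(h,f,f)$ is executed, the probability of measuring $\ket{0^n}$ is $2^{-2n}|C^{(m)}_f(\mathbf{y})|^2$; (ii) when $A^{(m)2,3}_n(h,f,f)$ is executed, the probability of measuring the driving qubit in $\ket{0}$ is $\frac12\left[1+\Re\left(2^{-n}\zeta_m^{-wt(\mathbf{y})}C^{(m)}_f(\mathbf{y})\right)\right]$.
   Context: $\zeta_m=e^{2\pi i/m}$, $\overline{\zeta_m}$ its conjugate; $wt$ is Hamming weight; $\mathbf{x}\cdot\mathbf{y}=\bigoplus_i x_iy_i$; $\mathbf{x}\odot\mathbf{y}=\sum_ix_iy_i$ in the integers. $m$-autocorrelation: $C^{(m)}_{f}(\mathbf{y})=\sum_{\mathbf{x}}(-1)^{f(\mathbf{x})\oplus f(\mathbf{x}\oplus\mathbf{y})}(\zeta_m^2)^{\mathbf{x}\odot\mathbf{y}}$. Gates: $\mathrm{H}$ Hadamard; $\Omega_m=\frac{1}{\sqrt2}\begin{pmatrix}1&\zeta_m\\1&-\zeta_m\end{pmatrix}$; $\overline{\Omega}_m=\frac{1}{\sqrt2}\begin{pmatrix}1&\overline{\zeta_m}\\1&-\overline{\zeta_m}\end{pmatrix}$; $\mathrm{S}_m=\mathrm{diag}(1,\zeta_m)$; $U_f$ is the phase oracle $\ket{\mathbf{x}}\mapsto(-1)^{f(\mathbf{x})}\ket{\mathbf{x}}$.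 Algorithm $A^{(m)3,3}_n(f_1,f_2,f_3)$: from $\ket{0^n}$ apply in order $\mathrm{H}^{\otimes n}$, $U_{f_2}$, $\Omega_m^{\otimes n}$, $U_{f_1}$, $\mathrm{H}^{\otimes n}$, $U_{f_3}$, $\overline{\Omega}_m^{\otimes n}$, then measure all qubits. Algorithm $A^{(m)2,3}_n(f_1,f_2,f_3)$: driving qubit in $\ket{+}$, $n$-qubit register in $\ket{0^n}$; apply $\mathrm{H}^{\otimes n}$ to the register; controlled on driving qubit $\ket{0}$ apply $U_{f_2}$, $\Omega_m^{\otimes n}$, $U_{f_1}$, $\mathrm{H}^{\otimes n}$ in order; controlled on driving qubit $\ket{1}$ apply $\mathrm{S}_m^{\otimes n}$, $U_{f_3}$ in order; apply $\mathrm{H}$ to the driving qubit and measure it. *)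

From HB Require Import structures.
From mathcomp Require Import all_boot all_order all_algebra.
From mathcomp Require Import complex.
From mathcomp Require Import reals trigo.
Set Implicit Arguments. Unset Strict Implicit. Unset Printing Implicit Defensive.
Import Order.TTheory GRing.Theory Num.Theory.
Local Open Scope ring_scope.
Local Open Scope complex_scope.

(* Computational basis of n qubits: bit strings F_2^n. *)
Definition bits (n : nat) := {ffun 'I_n -> bool}.

Section Quantum.
Variable R : realType.
Local Notation C := R[i].

Definition zeta (m : nat) : C :=
  (cos (2 * pi / m%:R)) +i* (sin (2 * pi / m%:R)).

Definition sqrt2 : C := (Num.sqrt (2 : R))%:C.

(* A single-qubit gate, given by its matrix entries G out in. *)
Definition gate := bool -> bool -> C.

Definition Hgate : gate := fun b c => (-1) ^+ (b && c) / sqrt2.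
Definition Omega (m : nat) : gate :=
  fun b c => (if c then (if b then - zeta m else zeta m) else 1) / sqrt2.
Definition Omegabar (m : nat) : gate :=
  fun b c => (if c then (if b then - (zeta m)^* else (zeta m)^*) else 1) / sqrt2.
Definition Sgate (m : nat) : gate :=
  fun b c => if b == c then (if b then zeta m else 1) else 0.

Definition state (n : nat) := bits n -> C.

Definition tens (n : nat) (G : gate) (psi : state n) : state n :=
  fun x => \sum_(z : bits n) (\prod_(i < n) G (x i) (z i)) * psi z.

Definition oracle (n : nat) (f : bits n -> bool) (psi : state n) : state n :=
  fun x => (-1) ^+ (f x) * psi x.

Definition ket0 (n : nat) : state n := fun x => (x == [ffun => false])%:R.

Arguments ket0 : clear implicits.

Definition A33 (m n : nat) (f1 f2 f3 : bits n -> bool) : state n :=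
  tens (Omegabar m) (oracle f3 (tens Hgate (oracle f1
    (tens (Omega m) (oracle f2 (tens Hgate (ket0 n))))))).

Definition prob_outcome (n : nat) (psi : state n) (x : bits n) : C := `|psi x| ^+ 2.

(* (n+1)-qubit states: driving qubit (bool) times n-qubit register *)
Definition dstate (n : nat) := bool -> state n.

Definition init_drv (n : nat) : dstate n := fun d => fun x => (ket0 n x) / sqrt2.
Arguments init_drv : clear implicits.
Definition on_reg (n : nat) (U : state n -> state n) (Psi : dstate n) : dstate n :=
  fun d => U (Psi d).
Definition ctrl (n : nat) (b : bool) (U : state n -> state n) (Psi : dstate n) : dstate n :=
  fun d => if d == b then U (Psi d) else Psi d.
Definition on_drv (n : nat) (G : gate) (Psi : dstate n) : dstate n :=
  fun d x => \sum_(c : bool) G d c * Psi c x.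

Definition A23 (m n : nat) (f1 f2 f3 : bits n -> bool) : dstate n :=
  let Psi1 := on_reg (tens Hgate) (init_drv n) in
  let Psi2 := ctrl false (tens Hgate) (ctrl false (oracle f1)
                (ctrl false (tens (Omega m)) (ctrl false (oracle f2) Psi1))) in
  let Psi3 := ctrl true (oracle f3) (ctrl true (tens (Sgate m)) Psi2) in
  on_drv Hgate Psi3.

Definition prob_drv (n : nat) (Psi : dstate n) (b : bool) : C :=
  \sum_(x : bits n) `|Psi b x| ^+ 2.

Definition dotF2 (n : nat) (x y : bits n) : bool := \big[addb/false]_(i < n) (x i && y i).
Definition dotZ (n : nat) (x y : bits n) : nat := \sum_(i < n) (x i && y i).
Definition xorb_bits (n : nat) (x y : bits n) : bits n := [ffun i => x i (+) y i].
Definition wt (n : nat) (y : bits n) : nat := \sum_(i < n) y i.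

Definition autocorr (m n : nat) (f : bits n -> bool) (y : bits n) : C :=
  \sum_(x : bits n) (-1) ^+ (f x (+) f (xorb_bits x y)) * (zeta m ^+ 2) ^+ (dotZ x y).

End Quantum.

Arguments A33 {R} m {n}.
Arguments A23 {R} m {n}.
Arguments autocorr {R} m {n}.

From HB Require Import structures.
From mathcomp Require Import all_boot all_order all_algebra.
From mathcomp Require Import complex.
From mathcomp Require Import reals trigo boolp ring.
Import Order.TTheory GRing.Theory Num.Theory.
Set Implicit Arguments. Unset Strict Implicit. Unset Printing Implicit Defensive.
Local Open Scope ring_scope.

(* On each qubit, H Z^(y_i) Omega = (H Z^(y_i) H) S is the phase shift
   |d> |-> zeta^d |d (+) y_i>, so the block H^n U_h Omega^n of both circuits maps a
   state psi to x |-> zeta^wt(x (+) y) psi(x (+) y).  Starting from the uniform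
   superposition, each algorithm therefore produces the overlap
   sum_x phi(x (+) y) conj(phi(x)) of the unimodular phase state
   phi(x) = (-1)^f(x) zeta^wt(x) with its translate by y; as
   wt(x (+) y) + 2 (x (.) y) = wt x + wt y, this overlap is zeta^wt(y) times the
   conjugate of C_f(y).  In A^{3,3} it is, up to 2^-n, the amplitude of |0^n>; in
   A^{2,3} the two branches interfere, and |a + b|^2 = 2 + 2 Re(a conj b) for
   unimodular a, b yields the probability of the driving qubit. *)

Lemma normCD_sqr (C : numClosedFieldType) (a b : C) :
  `|a + b| ^+ 2 = `|a| ^+ 2 + `|b| ^+ 2 + 2 * 'Re (a * b^*).
Proof. by rewrite !normCK ReE rmorphD rmorphM /= conjCK; field. Qed.

Lemma Re_sum (C : numClosedFieldType) (I : finType) (F : I -> C) :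
  'Re (\sum_i F i) = \sum_i 'Re (F i).
Proof. exact: raddf_sum. Qed.

Section Constants.
Variable R : realType.
Local Notation C := R[i].

Lemma sqrt2_sqr : sqrt2 R ^+ 2 = 2.
Proof. by rewrite /sqrt2 -rmorphXn /= sqr_sqrtr ?ler0n // rmorph_nat. Qed.

Lemma sqrt2V_sqr : (sqrt2 R)^-1 ^+ 2 = 2^-1.
Proof. by rewrite exprVn sqrt2_sqr. Qed.

Lemma conj_sqrt2 : (sqrt2 R)^* = sqrt2 R.
Proof. exact: conjc_real. Qed.

Lemma normr_sqrt2V_sqr : `|(sqrt2 R)^-1| ^+ 2 = 2^-1.
Proof. by rewrite normfV exprVn normCK conj_sqrt2 -expr2 sqrt2_sqr. Qed.

Variable m : nat.
Local Notation z := (zeta R m).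

Lemma zeta_mul_conj : z * z^* = 1.
Proof. by rewrite /zeta; simpc; rewrite -!expr2 cos2Dsin2 (mulrC (sin _)) addNr. Qed.

Lemma normr_zeta : `|z| = 1.
Proof. by apply/eqP; rewrite -sqrp_eq1 // normCK zeta_mul_conj. Qed.

Lemma zeta_neq0 : z != 0.
Proof. by rewrite -normr_eq0 normr_zeta oner_eq0. Qed.

Lemma conj_zeta : z^* = z^-1.
Proof. by apply: (mulfI zeta_neq0); rewrite zeta_mul_conj divff ?zeta_neq0. Qed.

End Constants.

Section Tensor.
Variables (R : realType) (n : nat).
Local Notation C := R[i].
Implicit Types (G : 'I_n -> gate R) (psi : state R n) (x : bits n).

Definition tensor G psi : state R n :=
  fun x => \sum_(w : bits n) (\prod_(i < n) G i (x i) (w i)) * psi w.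

Lemma tensE (G : gate R) : tens G = tensor (fun=> G).
Proof. by []. Qed.

Lemma eq_tensor G G' : (forall i, G i =2 G' i) -> tensor G =1 tensor G'.
Proof.
by move=> eqG psi; apply: funext => x; apply: eq_bigr => w _; under eq_bigr do rewrite eqG.
Qed.

Lemma tensor_diag_comp G1 (g : 'I_n -> bool -> C) G2 psi :
  tensor G1 (fun x => (\prod_(i < n) g i (x i)) * tensor G2 psi x) =
  tensor (fun i a c => \sum_(b : bool) G1 i a b * g i b * G2 i b c) psi.
Proof.
apply: funext => x; rewrite /tensor.
under eq_bigr do rewrite mulr_sumr mulr_sumr.
rewrite exchange_big /=; apply: eq_bigr => w _.
rewrite bigA_distr_bigA /= mulr_suml; apply: eq_bigr => u _.
by rewrite !mulrA -!big_split.
Qed.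

Lemma tensor_monomial (p : 'I_n -> bool -> bool) (g : 'I_n -> bool -> C) psi x :
  tensor (fun i a d => (d == p i a)%:R * g i d) psi x =
  (\prod_(i < n) g i (p i (x i))) * psi [ffun i => p i (x i)].
Proof.
rewrite /tensor (bigD1 [ffun i => p i (x i)]) //= [X in _ + X]big1 ?addr0 => [|w].
  by congr (_ * _); apply: eq_bigr => i _; rewrite ffunE eqxx mul1r.
move=> neq_w; have [i neq_wi] : exists i, w i != p i (x i).
  apply/existsP; apply: contraNT neq_w => /existsPn eq_w.
  by apply/eqP/ffunP => i; rewrite ffunE; apply/eqP/negPn.
by rewrite (bigD1 i) //= (negbTE neq_wi) !mul0r.
Qed.

Lemma tens_ket0 (G : gate R) x : tens G (@ket0 R n) x = \prod_(i < n) G (x i) false.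
Proof.
rewrite /tens (bigD1 [ffun=> false]) //= [X in _ + X]big1 => [|w /negbTE w_neq0].
  by rewrite /ket0 eqxx mulr1 addr0; apply: eq_bigr => i _; rewrite ffunE.
by rewrite /ket0 w_neq0 mulr0.
Qed.

End Tensor.

Section Gates.
Variables (R : realType) (m n : nat).
Local Notation C := R[i].
Local Notation z := (zeta R m).
Local Notation s := (sqrt2 R)^-1.
Implicit Types (psi : state R n) (x y : bits n).

Lemma Hgate_false_l b : Hgate R false b = s.
Proof. exact: mul1r. Qed.

Lemma Hgate_false_r b : Hgate R b false = s.
Proof. by rewrite /Hgate andbF mul1r. Qed.

Lemma tensZr (G : gate R) psi c :
  tens G (fun x => psi x * c) = fun x => tens G psi x * c.
Proof. by apply: funext => x; rewrite /tens mulr_suml; under eq_bigr do rewrite mulrA. Qed.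

Lemma tens_Hgate_ket0 : tens (Hgate R) (@ket0 R n) = fun=> s ^+ n.
Proof.
apply: funext => x; rewrite tens_ket0.
by under eq_bigr do rewrite Hgate_false_r; rewrite prodr_const card_ord.
Qed.

Lemma sign_dotF2 x y : (-1) ^+ dotF2 x y = \prod_(i < n) (-1) ^+ (x i && y i) :> C.
Proof. by rewrite /dotF2; elim/big_rec2: _ => // i b p _ <-; rewrite signr_addb. Qed.

Lemma oracle_dotF2 y psi :
  oracle (fun x => dotF2 x y) psi = fun x => (\prod_(i < n) (-1) ^+ (x i && y i)) * psi x.
Proof. by apply: funext => x; rewrite /oracle sign_dotF2. Qed.

Lemma Omega_Hgate b d : Omega R m b d = Hgate R b d * z ^+ d.
Proof. by case: b; case: d; rewrite /Omega /Hgate /= ?mulN1r ?mul1r ?mulr1 ?mulNr // mulrC. Qed.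

Lemma Hgate_sign_Hgate a c d :
  \sum_(b : bool) Hgate R a b * (-1) ^+ (b && c) * Hgate R b d = (d == a (+) c)%:R.
Proof.
have s2 : s * s = 2^-1 by rewrite -expr2 sqrt2V_sqr.
rewrite big_bool /Hgate.
case: a; case: c; case: d => /=;
  rewrite ?expr0 ?expr1 ?mulr1 ?mul1r ?mulN1r ?mulrN ?mulNr ?opprK ?mulr1 ?s2 ?addNr //.
all: by field.
Qed.

Lemma Hgate_sign_Omega a c d :
  \sum_(b : bool) Hgate R a b * (-1) ^+ (b && c) * Omega R m b d =
  (d == a (+) c)%:R * z ^+ d.
Proof.
under eq_bigr do rewrite Omega_Hgate mulrA.
by rewrite -mulr_suml Hgate_sign_Hgate.
Qed.

Lemma tens_Hgate_dotF2_Omega y psi :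
  tens (Hgate R) (oracle (fun x => dotF2 x y) (tens (Omega R m) psi)) =
  fun v => z ^+ wt (xorb_bits v y) * psi (xorb_bits v y).
Proof.
apply: funext => v; rewrite oracle_dotF2 !tensE.
rewrite (tensor_diag_comp _ (fun i b => (-1) ^+ (b && y i))).
rewrite (eq_tensor (G' := fun i a d => (d == a (+) y i)%:R * z ^+ d)) => [|i a d].
  rewrite tensor_monomial prodrXr /wt; congr (z ^+ _ * _).
  by apply: eq_bigr => i _; rewrite ffunE.
exact: Hgate_sign_Omega.
Qed.

Lemma tens_Sgate psi : tens (Sgate R m) psi = fun x => z ^+ wt x * psi x.
Proof.
apply: funext => x.
rewrite tensE (eq_tensor (G' := fun i a d => (d == a)%:R * z ^+ d)) => [|i a d].
  by rewrite tensor_monomial prodrXr; congr (_ * psi _); apply/ffunP => i; rewrite ffunE.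
by case: a; case: d; rewrite /Sgate /= ?mul1r ?mul0r.
Qed.

End Gates.

Section Correlation.
Variables (R : realType) (m n : nat).
Local Notation z := (zeta R m).
Implicit Types (f : bits n -> bool) (x y : bits n).

Definition phase_state f : state R n := fun x => (-1) ^+ f x * z ^+ wt x.

Lemma normr_phase_state f x : `|phase_state f x| = 1.
Proof. by rewrite normrM !normrX normrN1 normr_zeta !expr1n mulr1. Qed.

Lemma wt_xorb_bits x y : (wt (xorb_bits x y) + 2 * dotZ x y = wt x + wt y)%N.
Proof.
rewrite /wt /dotZ big_distrr -!big_split /=; apply: eq_bigr => i _.
by rewrite ffunE; case: (x i); case: (y i).
Qed.

Lemma zeta_wt_xorb_bits x y :
  z ^+ wt (xorb_bits x y) * (z ^+ wt x)^* = z ^+ wt y * ((z ^+ 2) ^+ dotZ x y)^*.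
Proof.
rewrite !rmorphXn /= conj_zeta !exprVn -exprM; apply/eqP.
by rewrite eqr_div ?expf_neq0 ?zeta_neq0 // -!exprD wt_xorb_bits addnC.
Qed.

Lemma sum_phase_state_xorb f y :
  \sum_x phase_state f (xorb_bits x y) * (phase_state f x)^* =
  z ^+ wt y * (autocorr m f y)^*.
Proof.
rewrite /autocorr rmorph_sum mulr_sumr; apply: eq_bigr => x _.
rewrite /phase_state !rmorphM !rmorph_sign signr_addb /=.
by rewrite mulrACA zeta_wt_xorb_bits mulrCA [(-1) ^+ f x * _]mulrC.
Qed.

End Correlation.

Section Circuits.
Variables (R : realType) (m n : nat) (f : bits n -> bool) (y : bits n).
Local Notation z := (zeta R m).
Local Notation s := (sqrt2 R)^-1.
Local Notation h := (fun x : bits n => dotF2 x y).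

Lemma A33_ket0 :
  A33 m h f f [ffun=> false] = 2 ^- n * (z ^+ wt y * (autocorr m f y)^*).
Proof.
rewrite /A33 tens_Hgate_ket0 tens_Hgate_dotF2_Omega.
rewrite -sum_phase_state_xorb mulr_sumr /tens /oracle; apply: eq_bigr => v _.
have -> : \prod_(i < n) Omegabar R m ([ffun=> false] i) (v i) = s ^+ n * (z ^+ wt v)^*.
  rewrite rmorphXn /= -prodrXr -[n in s ^+ n]card_ord -prodr_const -big_split /=.
  apply: eq_bigr => i _.
  by rewrite ffunE /Omegabar; case: (v i); rewrite ?expr1 ?expr0 mulrC.
have -> : 2 ^- n = s ^+ n * s ^+ n :> R[i].
  by rewrite -exprMn -expr2 sqrt2V_sqr exprVn.
rewrite /phase_state rmorphM rmorph_sign /=.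
set w := (z ^+ wt v)^*.
by ring.
Qed.

Lemma prob_outcome_A33 :
  prob_outcome (A33 m h f f) [ffun=> false] =
  (2 ^- (2 * n) : R[i]) * `|autocorr m f y| ^+ 2.
Proof.
rewrite /prob_outcome A33_ket0 !normrM normfV !normrX normr_zeta norm_conjC normr_nat.
by rewrite expr1n mul1r exprMn exprVn -exprM mulnC.
Qed.

Lemma A23_false x :
  A23 m h f f false x =
  2^-1 * s ^+ n * (phase_state R m f (xorb_bits x y) + phase_state R m f x).
Proof.
have init : on_reg (tens (Hgate R)) (@init_drv R n) = fun _ _ => s ^+ n * s.
  by apply: funext => d; rewrite /on_reg /init_drv tensZr tens_Hgate_ket0.
rewrite /A23 init /on_drv big_bool /ctrl /= tens_Sgate tens_Hgate_dotF2_Omega.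
rewrite !Hgate_false_l /oracle /phase_state -sqrt2V_sqr.
by ring.
Qed.

Lemma prob_drv_A23 :
  prob_drv (A23 m h f f) false =
  2^-1 * (1 + 'Re (2 ^- n * z ^- wt y * autocorr m f y)).
Proof.
rewrite /prob_drv.
under eq_bigr do rewrite A23_false normrM exprMn normCD_sqr !normr_phase_state.
rewrite -mulr_sumr !big_split /= sumr_const -mulr_sumr -Re_sum sum_phase_state_xorb.
rewrite card_ffun card_bool card_ord expr1n natrX.
have -> : z ^+ wt y * (autocorr m f y)^* = (z ^- wt y * autocorr m f y)^*.
  by rewrite rmorphM fmorphV rmorphXn /= conj_zeta exprVn invrK.
rewrite /= Re_conj -mulrA [in RHS]ReMl ?rpredV ?rpredX ?realn //.
rewrite normrM exprMn normfV normr_nat normrX -exprM mulnC exprM normr_sqrt2V_sqr !exprVn.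
by field; rewrite expf_neq0 ?pnatr_eq0.
Qed.

End Circuits.

Local Open Scope complex_scope.

Theorem corollary2 (R : realType) (n m : nat) (f : bits n -> bool) (y : bits n) :
  let h := fun x : bits n => dotF2 x y in
  prob_outcome (A33 m h f f) [ffun => false] =
    (2 ^- (2 * n) : R[i]) * `|autocorr m f y| ^+ 2
  /\
  prob_drv (A23 m h f f) false =
    2^-1 * (1 + 'Re ((2 ^- n : R[i]) * (zeta R m) ^- (wt y) * autocorr m f y)).
Proof. by split; [exact: prob_outcome_A33 | exact: prob_drv_A23]. Qed.
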